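(* Let $n$ be a positive integer. Define $z:J_n\to I_n$ by $z(A,B,C)=(A,\emptyset,BC)$, where $BC$ denotes the concatenation of $B$ followed by $C$. Then $z$ is a well-defined bijection from $J_n$ onto $I_n$.
   Context: A lattice path here is a finite (possibly empty) sequence of steps, each an up step $(1,1)$ or a down step $(1,-1)$, drawn as a polygonal line; concatenation $BC$ is the path consisting of the steps of $B$ followed by those of $C$. $T_n$ is the set of ordered triples $(A,B,C)$ of lattice paths such that for some nonnegative integers $i,j,k$ with $i+j+k=n$, $A$ has $i$ up and $i$ down steps, $B$ has $j$ up and $j$ down steps, and $C$ has $k$ up and $k$ down steps; each path in a triple is regarded as drawn starting (and hence ending) on the horizontal axis. $I_n$ is the set of $(A,B,C)\in T_n$ such that $B$ is empty and $C$ has both a point strictly above and a point strictly below the horizontal axis. $J_n$ is the set of $(A,B,C)\in T_n$ such that either (1) $B$ ends with a down step, $C$ is nonempty, and no point of $C$ is strictly above the horizontal axis, or (2) $B$ ends with an up step, $C$ is nonempty, and no point of $C$ is strictly below the horizontal axis. *)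

From mathcomp Require Import all_boot all_algebra.
Set Implicit Arguments. Unset Strict Implicit. Unset Printing Implicit Defensive.
Import GRing.Theory Num.Theory.
Local Open Scope ring_scope.

(* A lattice path is a finite sequence of steps: true = up step (1,1),
   false = down step (1,-1).  Concatenation is seq concatenation (++). *)
Definition path := seq bool.

Definition step (b : bool) : int := if b then 1 else -1.

Definition height (p : path) : int := \sum_(x <- p) step x.

(* the vertices of p are the endpoints of its prefixes take k p, 0 <= k <= size p;
   a point of the polygonal line is strictly above (below) the axis iff some
   vertex is (the line is piecewise linear between consecutive vertices). *)
Definition has_above (p : path) : bool :=
  has (fun k => 0 < height (take k p)) (iota 0 (size p).+1).
Definition has_below (p : path) : bool :=
  has (fun k => height (take k p) < 0) (iota 0 (size p).+1).

Definition triple := (path * path * path)%type.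

Definition semilen (p : path) (i : nat) : Prop :=
  count id p = i /\ count negb p = i.

Definition inT (n : nat) (t : triple) : Prop :=
  let: (A, B, C) := t in
  exists i j k : nat, (i + j + k)%N = n /\ semilen A i /\ semilen B j /\ semilen C k.

Definition inI (n : nat) (t : triple) : Prop :=
  let: (A, B, C) := t in
  inT n t /\ B = [::] /\ has_above C /\ has_below C.

Definition inJ (n : nat) (t : triple) : Prop :=
  let: (A, B, C) := t in
  inT n t /\
  ((exists B', B = rcons B' false) /\ C <> [::] /\ ~~ has_above C \/
   (exists B', B = rcons B' true) /\ C <> [::] /\ ~~ has_below C).

Definition z (t : triple) : triple :=
  let: (A, B, C) := t in (A, [::], B ++ C).

From mathcomp Require Import all_boot all_algebra.
From mathcomp Require Import zify.
Import GRing.Theory Num.Theory.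

(* For (A, B, C) in J_n, the path D = BC is back on the axis at the end of B, having
   arrived there from one side, and C never returns strictly to that side.  So |B|
   is the last crossing of D: the last vertex whose two neighbours lie strictly on
   opposite sides of the axis.  Conversely, a path visiting both sides has a unique
   last crossing, one step after the earlier of its last visits to the two sides,
   and cutting it there recovers B and C. *)

Set Implicit Arguments.
Unset Strict Implicit.
Unset Printing Implicit Defensive.

Local Open Scope ring_scope.

Definition level (D : seq bool) (k : nat) : int := height (take k D).

Definition beyond (b : bool) (x : int) : bool := if b then 0 < x else x < 0.

Definition visits (b : bool) (D : seq bool) : bool :=
  if b then has_above D else has_below D.

Lemma height_cat B C : height (B ++ C) = height B + height C.
Proof. by rewrite /height big_cat. Qed.

Lemma height_rcons B x : height (rcons B x) = height B + step x.
Proof. by rewrite -cats1 height_cat /height big_seq1. Qed.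

Lemma height_count D : height D = (count id D)%:Z - (count negb D)%:Z.
Proof.
elim: D => [|x D IH]; first by rewrite /height big_nil.
rewrite /height big_cons -/(height D) IH; case: x => /=; rewrite /step; lia.
Qed.

Lemma levelS D k : (k < size D)%N -> level D k.+1 = level D k + step (nth false D k).
Proof. by move=> kD; rewrite /level (take_nth false) // height_rcons. Qed.

Lemma level_catr B C k : level (B ++ C) (size B + k) = height B + level C k.
Proof. by rewrite /level takeD take_size_cat // drop_size_cat // height_cat. Qed.

Lemma visitsP b D :
  reflect (exists2 k, (k <= size D)%N & beyond b (level D k)) (visits b D).
Proof.
have memP k : (k \in iota 0 (size D).+1) = (k <= size D)%N.
  by rewrite mem_iota add0n ltnS.
by case: b; apply: (iffP hasP) => -[k]; rewrite ?memP => kD; exists k; rewrite ?memP.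
Qed.

Lemma beyond_step b x : beyond b (step x) = (x == b).
Proof. by case: b; case: x. Qed.

Lemma beyond_opp b x : beyond b (- x) = beyond (~~ b) x.
Proof. by case: b; rewrite /= ?oppr_gt0 ?oppr_lt0. Qed.

Definition last_crossing (D : seq bool) (p : nat) (b : bool) : Prop :=
  [/\ (0 < p < size D)%N, level D p.-1 = step b, level D p.+1 = - step b &
      forall k, (p <= k <= size D)%N -> ~~ beyond b (level D k)].

Lemma last_crossing_level D p b : last_crossing D p b -> level D p = 0.
Proof.
case=> /andP[p0 pD] before after _.
have := levelS pD; have := levelS (leq_ltn_trans (leq_pred p) pD).
rewrite prednK // before after.
by case: (nth false D p.-1) (nth false D p) => [] []; rewrite /step;
  case: b {before after} => /=; lia.
Qed.

Lemma last_crossing_unique D p q b c :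
  last_crossing D p b -> last_crossing D q c -> p = q.
Proof.
wlog pq : p q b c / (p <= q)%N.
  move=> W Hp Hq; case: (leqP p q) => pq; first exact: W Hp Hq.
  by symmetry; apply: W Hq Hp; apply: ltnW.
case=> /andP[p0 _] _ _ after [/andP[q0 qD] before_q after_q _].
apply/eqP; rewrite eqn_leq pq leqNgt; apply/negP => lt_pq.
have := after q.-1 ltac:(lia); have := after q.+1 ltac:(lia).
rewrite before_q after_q beyond_opp !beyond_step.
by clear; case: b c => [] [].
Qed.

Lemma last_crossing_visits D p b :
  last_crossing D p b -> visits true D /\ visits false D.
Proof.
case=> /andP[_ pD] before after _.
have vis k c : (k <= size D)%N -> level D k = step c -> visits c D.
  by move=> kD e; apply/visitsP; exists k; rewrite // e beyond_step.
have visN k c : (k <= size D)%N -> level D k = - step c -> visits (~~ c) D.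
  by move=> kD e; apply: (vis k); rewrite // e; case: c {e}.
have vb : visits b D by apply: (vis p.-1) before; lia.
have vnb : visits (~~ b) D by apply: (visN p.+1) after.
by case: b {before after} vb vnb.
Qed.

Lemma last_visit b D : visits b D ->
  exists k, [/\ (k <= size D)%N, beyond b (level D k) &
    forall k', (k < k' <= size D)%N -> ~~ beyond b (level D k')].
Proof.
move=> /visitsP[k0 k0D vis0].
have ex : exists k, (k <= size D)%N && beyond b (level D k).
  by exists k0; rewrite k0D.
have [k /andP[kD visk] maxk] := ex_maxnP ex (fun k => @proj1 _ _ \o andP).
exists k; split=> // k' /andP[lt_kk' k'D]; apply/negP => visk'.
by have := maxk k'; rewrite k'D visk' => /(_ isT); rewrite leqNgt lt_kk'.
Qed.

Lemma crossing_after_last_visit D b ka kb :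
  (ka < kb <= size D)%N -> beyond b (level D ka) -> beyond (~~ b) (level D kb) ->
  (forall k, (ka < k <= size D)%N -> ~~ beyond b (level D k)) ->
  last_crossing D ka.+1 b.
Proof.
move=> /andP[lt_ab bD] vis_a vis_b after.
have aD : (ka < size D)%N by apply: leq_trans bD.
have [at_a at_a1] : level D ka = step b /\ level D ka.+1 = 0.
  have := after ka.+1 ltac:(lia); rewrite (levelS aD) /step.
  by move: vis_a; case: (nth _ _ _); case: b {vis_b after} => /=; lia.
have a1D : (ka.+1 < size D)%N.
  apply: leq_trans bD; rewrite ltn_neqAle lt_ab andbT.
  by apply/eqP=> e; move: vis_b; rewrite -e at_a1; case: b {at_a vis_a after}.
split=> //.
have := after ka.+2 ltac:(lia); rewrite (levelS a1D) at_a1 add0r beyond_step.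
by case: (nth _ _ _); case: b {at_a vis_a vis_b after}.
Qed.

Lemma exists_last_crossing D :
  visits true D -> visits false D -> exists p b, last_crossing D p b.
Proof.
move=> /last_visit[ka [kaD vis_a after_a]] /last_visit[kb [kbD vis_b after_b]].
case: (ltngtP ka kb) => [lt_ab|lt_ba|e].
- by exists ka.+1, true; apply: crossing_after_last_visit vis_a vis_b after_a; rewrite lt_ab kbD.
- by exists kb.+1, false; apply: crossing_after_last_visit vis_b vis_a after_b; rewrite lt_ba kaD.
- by move: vis_a vis_b; rewrite e /=; lia.
Qed.

Definition crossing_split (B C : seq bool) (b : bool) : Prop :=
  [/\ exists B', B = rcons B' (~~ b), C <> [::] & ~~ visits b C].

Lemma inJE n A B C :
  inJ n (A, B, C) <-> inT n (A, B, C) /\ exists b, crossing_split B C b.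
Proof.
split=> [[hT [[eB [nC vC]]|[eB [nC vC]]]]|[hT [[] [eB nC vC]]]]; split=> //.
- by exists true.
- by exists false.
- by left.
- by right.
Qed.

Lemma crossing_splitP B C b : height B = 0 ->
  crossing_split B C b <-> last_crossing (B ++ C) (size B) b.
Proof.
move=> hB; have levelC k : level (B ++ C) (size B + k) = level C k.
  by rewrite level_catr hB add0r.
split.
- case=> [[B' eB] nC noC].
  have hB' : height B' = step b.
    by move: hB; rewrite eB height_rcons; case: b {eB noC} => /=; rewrite /step /=; lia.
  have atB1 : level (B ++ C) (size B).+1 = - step b.
    case: C nC noC levelC => [//|c C] _ /visitsP noC levelC.
    have : ~~ beyond b (level (c :: C) 1) by apply/negP => v; apply: noC; exists 1%N.
    rewrite -[(size B).+1]addn1 levelC /level /= take0 /height big_seq1 beyond_step.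
    by case: b c {hB' eB noC levelC} => [] [].
  split=> //.
  + rewrite size_cat eB size_rcons /=; case: C nC {noC levelC atB1} => //= *; lia.
  + by rewrite eB size_rcons /= /level -cats1 -catA take_size_cat.
  + move=> k /andP[Bk kBC]; rewrite -(subnKC Bk) levelC.
    apply/negP => v; move/visitsP: noC; apply; exists (k - size B)%N => //.
    by rewrite size_cat in kBC; lia.
- case=> /andP[B0 BC] before _ after.
  case/lastP: B hB B0 BC before after levelC => [//|B' x] hB _ BC before after levelC.
  have {}before : height B' = step b.
    by rewrite -before size_rcons /= /level -cats1 -catA take_size_cat.
  have ex : x = ~~ b.
    by move: hB; rewrite height_rcons before; clear; case: b x => [] [] /=; rewrite /step.
  split.
  + by exists B'; rewrite ex.
  + by move=> eC; rewrite eC cats0 ltnn in BC.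
  + apply/negP => /visitsP[k kC vk].
    suff : ~~ beyond b (level C k) by rewrite vk.
    by rewrite -levelC; apply: after; rewrite size_cat; lia.
Qed.

Lemma semilen_height A i : semilen A i -> height A = 0.
Proof. by case=> up down; rewrite height_count up down subrr. Qed.

Lemma height0_semilen B : height B = 0 -> semilen B (count id B).
Proof. by rewrite height_count; split=> //; lia. Qed.

Lemma semilen_cat B C j k :
  semilen B j -> semilen C k -> semilen (B ++ C) (j + k).
Proof.
by case=> upB downB [upC downC]; rewrite /semilen !count_cat upB downB upC downC.
Qed.

Lemma inT_height_middle n A B C : inT n (A, B, C) -> height B = 0.
Proof. by case=> [i [j [k [_ [_ [sB _]]]]]]; apply: semilen_height sB. Qed.

Lemma inT_catE n A B C : height B = 0 ->
  inT n (A, B, C) <-> inT n (A, [::], B ++ C).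
Proof.
move=> hB; split.
- case=> i [j [k [e [sA [sB sC]]]]].
  exists i, 0%N, (j + k)%N; split; first lia.
  by split=> //; split; [|exact: semilen_cat].
- case=> i [j [m [e [sA [[/= j0 _] sD]]]]].
  have hC : height C = 0.
    by move: (semilen_height sD); rewrite height_cat hB add0r.
  exists i, (count id B), (count id C); split.
    by case: sD; rewrite count_cat => cnt _; lia.
  by split=> //; split; apply: height0_semilen.
Qed.

Theorem lemma4 (n : nat) (hn : (0 < n)%N) :
  (forall t, inJ n t -> inI n (z t)) /\
  (forall t1 t2, inJ n t1 -> inJ n t2 -> z t1 = z t2 -> t1 = t2) /\
  (forall u, inI n u -> exists t, inJ n t /\ z t = u).
Proof.
split; [|split].
- move=> [[A B] C] /inJE[hT [b sp]] /=.
  have hB := inT_height_middle hT.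
  split; first exact: (inT_catE n A C hB).1 hT.
  by split=> //; apply: last_crossing_visits ((crossing_splitP C b hB).1 sp).
- move=> [[A B] C] [[A' B'] C'] /inJE[hT [b sp]] /inJE[hT' [b' sp']] [<- eD].
  move/(crossing_splitP _ _ (inT_height_middle hT)): sp.
  move/(crossing_splitP _ _ (inT_height_middle hT')): sp'.
  rewrite -eD => lc' lc; have eB := last_crossing_unique lc lc'.
  by move/eqP: eD; rewrite eqseq_cat // => /andP[/eqP-> /eqP->].
- move=> [[A B] D] [hT [eB [up down]]]; subst B.
  have [p [b lc]] := exists_last_crossing up down.
  have pD : (p <= size D)%N by case: lc => /andP[_ /ltnW].
  have hB : height (take p D) = 0 := last_crossing_level lc.
  exists (A, take p D, drop p D); split; last by rewrite /= cat_take_drop.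
  apply/inJE; split; first by apply: (inT_catE n A _ hB).2; rewrite cat_take_drop.
  by exists b; apply/crossing_splitP; rewrite // cat_take_drop size_takel.
Qed.
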